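(* Let $T$ be a finite set, let $(X_t)_{t\in T}$ be a random process with $\mathbf{E}|X_t|<\infty$ for all $t$, and let $(m_t)_{t\in T}$ be real numbers. Then $$\mathbf{E}\Big[\sup_{t\in T}\{X_t+m_t\}\Big]=\sup_{\mu}\Big\{\mathscr{F}(X,\mu)+\sum_{t\in T} m_t\,\mu(\{t\})\Big\},$$ where the supremum is over all probability measures $\mu$ on $T$.
   Context: For a finite set $T$, a probability measure $P_X$ on $\mathbb{R}^T$ with $\int\|x\|\,P_X(dx)<\infty$ and a probability measure $\mu$ on $T$, Fernique's functional is $\mathscr{F}(P_X,\mu)=\sup \mathbf{E}[X_Z]$, where the supremum is over all couplings $(X,Z)$ (pairs of random variables on a common probability space) with $X\sim P_X$ and $Z\sim\mu$. For a random process $X=(X_t)_{t\in T}$ one writes $\mathscr{F}(X,\mu)=\mathscr{F}(P_X,\mu)$ with $P_X$ the law of $X$. *)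

From HB Require Import structures.
From mathcomp Require Import all_boot all_order all_algebra.
From mathcomp Require Import all_classical all_reals all_analysis.
Set Implicit Arguments. Unset Strict Implicit. Unset Printing Implicit Defensive.
Import Order.TTheory GRing.Theory Num.Theory.
Local Open Scope classical_set_scope.
Local Open Scope ring_scope.

(* A probability measure on the finite set T, given by its weights mu t = mu({t}). *)
Definition is_pmf (R : realType) (T : finType) (mu : T -> R) : Prop :=
  (forall t, 0 <= mu t) /\ \sum_(t in T) mu t = 1.

Definition is_process (R : realType) (d : measure_display) (Omega : measurableType d)
  (T : finType) (X : T -> Omega -> R) : Prop :=
  forall t, measurable_fun setT (X t).

(* Equality of laws of two processes indexed by the finite set T: the laws of
   the random vectors (X_t)_t and (X'_t)_t coincide on all measurable rectangles
   prod_t B_t (which generate the product sigma-algebra of R^T and form a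
   pi-system, so this is equality of the laws on R^T). *)
Definition same_law (R : realType)
  (d : measure_display) (Omega : measurableType d) (P : probability Omega R)
  (d' : measure_display) (Omega' : measurableType d') (P' : probability Omega' R)
  (T : finType) (X : T -> Omega -> R) (X' : T -> Omega' -> R) : Prop :=
  forall B : T -> set R, (forall t, measurable (B t)) ->
    P (\bigcap_(t in [set: T]) (X t @^-1` B t))
    = P' (\bigcap_(t in [set: T]) (X' t @^-1` B t)).

Definition has_law_fin (R : realType) (d : measure_display) (Omega : measurableType d)
  (P : probability Omega R) (T : finType) (Z : Omega -> T) (mu : T -> R) : Prop :=
  forall t, measurable (Z @^-1` [set t]) /\ P (Z @^-1` [set t]) = (mu t)%:E.

(* Fernique's functional F(X, mu) = sup E[X'_Z] over all couplings (X', Z)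
   on a common probability space, with X' distributed as X and Z ~ mu. *)
Definition fernique (R : realType) (d : measure_display) (Omega : measurableType d)
  (P : probability Omega R) (T : finType) (X : T -> Omega -> R) (mu : T -> R) : \bar R :=
  ereal_sup [set e | exists (d' : measure_display) (Omega' : measurableType d')
      (P' : probability Omega' R) (X' : T -> Omega' -> R) (Z : Omega' -> T),
      [/\ is_process X', same_law P P' X X', has_law_fin P' Z mu &
          e = (\int[P']_w ((X' (Z w) w)%:E))%E]].

(* Write M(x) := max_t (x_t + m_t).  For any coupling (X', Z) with X' ~ X and
   Z ~ mu, E[X'_Z] + sum_t m_t mu{t} = E[X'_Z + m_Z] <= E[M(X')] = E[M(X)],
   since M(X') and M(X) have the same law.  Conversely, let Z be a measurable
   selection of an index attaining the maximum in M(X) on the original space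
   and mu the law of Z: then E[M(X)] = E[X_Z] + E[m_Z], and (X, Z) is one of
   the couplings over which F(X, mu) is a supremum.  When T is empty both
   sides are -oo. *)
From HB Require Import structures.
From mathcomp Require Import all_boot all_order all_algebra.
From mathcomp Require Import all_classical all_reals all_analysis.
From mathcomp Require Import measurable_realfun.
Set Implicit Arguments. Unset Strict Implicit. Unset Printing Implicit Defensive.
Import Order.TTheory GRing.Theory Num.Theory.
Local Open Scope classical_set_scope.
Local Open Scope ring_scope.

Section finite_random_variable.
Context (R : realType) (d : measure_display) (Omega : measurableType d)
  (P : probability Omega R) (T : finType).

Lemma measurable_fibers_comp (b : Omega -> {ffun T -> bool})
    (g : {ffun T -> bool} -> T) :
  (forall s, measurable [set w | b w s]) ->
  forall t, measurable ((fun w => g (b w)) @^-1` [set t]).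
Proof.
move=> mb t.
have -> : (fun w => g (b w)) @^-1` [set t] =
    \bigcup_(v in [set v | g v = t]) \bigcap_(s in [set: T]) [set w | b w s = v s].
  apply/seteqP; split => w /=.
  - by move=> gbt; exists (b w) => // s _.
  - by move=> [v /= <- bv]; congr g; apply/ffunP => s; exact: bv.
apply: fin_bigcup_measurable; first exact: finite_finset.
move=> v _; apply: fin_bigcap_measurable; first exact: finite_finset.
move=> s _; have -> : [set w | b w s = v s] =
    if v s then [set w | b w s] else ~` [set w | b w s].
  by case: (v s); apply/seteqP; split => w /=; case: (b w s).
by case: (v s) => //; exact: measurableC.
Qed.

Lemma eval_sum_indic (Z : Omega -> T) (f : T -> Omega -> R) w :
  f (Z w) w = \sum_(t in T) f t w * \1_(Z @^-1` [set t]) w.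
Proof.
rewrite (bigD1 (Z w)) //= indicE mem_set // mulr1 big1 ?addr0 // => t tZ.
by rewrite indicE memNset ?mulr0 //= => Zt; rewrite Zt eqxx in tZ.
Qed.

Variable Z : Omega -> T.

Lemma integral_comp_law (mu : T -> R) (m : T -> R) :
  has_law_fin P Z mu ->
  (\int[P]_w (m (Z w))%:E = (\sum_(t in T) m t * mu t)%:E)%E.
Proof.
move=> hZ; have iZ t := @integrable_indic _ _ _ P _ (hZ t).1.
under eq_integral do rewrite (eval_sum_indic Z (fun t _ => m t)) -sumEFin.
rewrite integral_sum //; last first.
  by move=> t; under eq_fun do rewrite EFinM; exact: integrableZl.
rewrite -sumEFin; apply: eq_bigr => t _; under eq_integral do rewrite EFinM.
rewrite integralZl // integral_indic //; last exact: (hZ t).1.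
by rewrite setIT EFinM; congr (_ * _)%E; exact: (hZ t).2.
Qed.

Lemma has_law_fin_is_pmf (mu : T -> R) : has_law_fin P Z mu -> is_pmf mu.
Proof.
move=> hZ; split => [t|].
  by rewrite -lee_fin -(hZ t).2 measure_ge0.
have := integral_comp_law (fun _ => 1) hZ.
rewrite integral_cst // => int1.
have : (1%:E * P [set: Omega] = (\sum_(t in T) 1 * mu t)%:E)%E := int1.
rewrite (@probability_setT _ _ _ P) mul1e => /esym sum1.
have {}sum1 := EFin_inj sum1.
by rewrite -[RHS]sum1; apply: eq_bigr => t _; rewrite mul1r.
Qed.

Hypothesis mZ : forall t, measurable (Z @^-1` [set t]).

Lemma integrable_eval (X : T -> Omega -> R) :
  (forall t, P.-integrable setT (EFin \o X t)) ->
  P.-integrable setT (fun w => (X (Z w) w)%:E).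
Proof.
move=> iX; have -> : (fun w => (X (Z w) w)%:E) =
    fun w => (\sum_(t in T) (X t w * \1_(Z @^-1` [set t]) w)%:E)%E.
  by apply/funext => w; rewrite eval_sum_indic sumEFin.
apply: integrable_sum => // t _; apply: (le_integrable _ _ _ (iX t)) => //.
  apply/measurable_EFinP; apply: measurable_funM; last exact: measurable_indic.
  exact/measurable_EFinP/(measurable_int _ (iX t)).
move=> w _; rewrite /= lee_fin normrM indicE.
by case: (w \in _); rewrite ?normr1 ?normr0 ?mulr1 ?mulr0.
Qed.

Lemma integrable_comp_fin (m : T -> R) :
  P.-integrable setT (fun w => (m (Z w))%:E).
Proof.
apply: (integrable_eval (X := fun t _ => m t)) => t.
exact: finite_measure_integrable_cst.
Qed.

Lemma has_law_fin_fibers :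
  has_law_fin P Z (fun t => fine (P (Z @^-1` [set t]))).
Proof. by move=> t; split => //; rewrite fineK // fin_num_measure. Qed.

End finite_random_variable.

Section equal_lower_tails.
Context (R : realType) (d : measure_display) (Omega : measurableType d)
  (P : probability Omega R) (d' : measure_display) (Omega' : measurableType d')
  (P' : probability Omega' R) (Y : Omega -> R) (Y' : Omega' -> R).
Hypotheses (mY : measurable_fun setT Y) (mY' : measurable_fun setT Y').
Hypothesis tailYY' :
  forall c, P (Y @^-1` `]-oo, c[) = P' (Y' @^-1` `]-oo, c[).

Let Ym : {mfun Omega >-> R} := HB.pack Y (isMeasurableFun.Build _ _ _ _ Y mY).
Let Ym' : {mfun Omega' >-> R} := HB.pack Y' (isMeasurableFun.Build _ _ _ _ Y' mY').

(* The lower half-lines form a pi-system generating the Borel sets of R. *)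
Lemma distribution_eq_of_tails A :
  measurable A -> distribution P Ym A = distribution P' Ym' A.
Proof.
move=> mA; apply: (@measure_function.measure_unique _ R _ (@RGenInftyO.G R)
  (fun k : nat => `]-oo, k%:R[%classic) _ _ _ _
  (distribution P Ym) (distribution P' Ym')) => //.
- exact: RGenInftyO.measurableE.
- move=> _ _ [x ->] [y ->]; exists (Num.min x y).
  by apply/seteqP; split => z /=; rewrite !in_itv /= lt_min;
    [move=> [-> ->]|move=> /andP].
- by move=> k; exists k%:R.
- apply/seteqP; split => // z _; exists (Num.truncn z).+1 => //=.
  by rewrite in_itv /= truncnS_gt.
- by move=> _ [c ->]; exact: tailYY'.
- by move=> k; rewrite (le_lt_trans (probability_le1 _ _)) ?ltey.
Qed.

Lemma ge0_integral_eq_of_tails (g : R -> \bar R) :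
  measurable_fun setT g -> (forall x, (0 <= g x)%E) ->
  (\int[P]_w g (Y w) = \int[P']_w g (Y' w))%E.
Proof.
move=> mg g0; rewrite -[LHS]/(\int[P]_w (g \o Ym) w)%E.
rewrite -[RHS]/(\int[P']_w (g \o Ym') w)%E -!ge0_integral_distribution //.
by apply: eq_measure_integral => B mB _; exact: distribution_eq_of_tails.
Qed.

Lemma integral_eq_of_tails : (\int[P]_w (Y w)%:E = \int[P']_w (Y' w)%:E)%E.
Proof.
have mE : measurable_fun [set: R] (EFin : R -> \bar R) by exact/measurable_EFinP.
rewrite integralE [RHS]integralE; congr (_ - _)%E.
- have := ge0_integral_eq_of_tails (measurable_funepos mE) (fun _ => funepos_ge0 _ _).
  move=> eq_pos; transitivity (\int[P]_w EFin^\+ (Y w))%E.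
    by apply: eq_integral => w _; rewrite !funeposE.
  by rewrite eq_pos; apply: eq_integral => w _; rewrite ?funeposE.
- have := ge0_integral_eq_of_tails (measurable_funeneg mE) (fun _ => funeneg_ge0 _ _).
  move=> eq_neg; transitivity (\int[P]_w EFin^\- (Y w))%E.
    by apply: eq_integral => w _; rewrite !funenegE.
  by rewrite eq_neg; apply: eq_integral => w _; rewrite ?funenegE.
Qed.

Lemma integrable_of_tails :
  P.-integrable setT (EFin \o Y) -> P'.-integrable setT (EFin \o Y').
Proof.
case/integrableP => _ iY; apply/integrableP; split; first exact/measurable_EFinP.
have mabs : measurable_fun setT (fun x : R => `|x%:E|%E).
  by apply: measurableT_comp => //; exact: measurable_EFinP.
by rewrite -(ge0_integral_eq_of_tails mabs (fun _ => abse_ge0 _)).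
Qed.

End equal_lower_tails.

Lemma same_law_coord (R : realType)
    (d : measure_display) (Omega : measurableType d) (P : probability Omega R)
    (d' : measure_display) (Omega' : measurableType d') (P' : probability Omega' R)
    (T : finType) (X : T -> Omega -> R) (X' : T -> Omega' -> R) :
  same_law P P' X X' ->
  forall t A, measurable A -> P (X t @^-1` A) = P' (X' t @^-1` A).
Proof.
move=> XX' t A mA.
have cyl (Q : Type) (Y : T -> Q -> R) : Y t @^-1` A =
    \bigcap_(s in [set: T]) (Y s @^-1` (if s == t then A else setT)).
  apply/seteqP; split => w /=; last by move/(_ t I); rewrite eqxx.
  by move=> Ytw s _; case: eqP => [->|].
by rewrite cyl [in RHS]cyl; apply: XX' => s; case: (s == t).
Qed.

Section shifted_max.
Context (R : realType) (T : finType) (t0 : T) (m : T -> R).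

Definition shifted_max (x : T -> R) : R :=
  \big[Order.max/x t0 + m t0]_(t in T) (x t + m t).

Lemma le_shifted_max x t : x t + m t <= shifted_max x.
Proof. exact: le_bigmax_cond. Qed.

Lemma shifted_max_ltP x c :
  shifted_max x < c <-> (forall t, x t + m t < c).
Proof.
split => [/bigmax_ltP [_ xc] t|xc]; first exact: xc.
by apply/bigmax_ltP; split => // t _; exact: xc.
Qed.

Lemma shifted_max_attained x : exists t, shifted_max x = x t + m t.
Proof.
apply: (big_ind (fun v => exists t, v = x t + m t)) => [|a b [i ->] [j ->]|i _].
- by exists t0.
- by case: (leP (x i + m i) (x j + m j)); [exists j | exists i].
- by exists i.
Qed.

Lemma EFin_shifted_max x :
  (shifted_max x)%:E = \big[Order.max/-oo%E]_(t in T) (x t + m t)%:E.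
Proof.
rewrite /shifted_max (big_morph (@EFin R) (@EFin_max R) erefl).
apply/le_anti/andP; split.
- apply: bigmax_le => [|t _]; last exact: le_bigmax_cond.
  by rewrite (bigmaxD1 t0) // le_max lexx.
- apply: bigmax_le => [|t _]; first exact: leNye.
  by rewrite (bigmaxD1 t) // le_max lexx.
Qed.

Lemma norm_shifted_max_le x :
  `|shifted_max x| <= \sum_(t in T) (`|x t| + `|m t|).
Proof.
have [t ->] := shifted_max_attained x.
rewrite (le_trans (ler_normD _ _)) // (bigD1 t) //= lerDl.
by apply: sumr_ge0 => s _; rewrite addr_ge0.
Qed.

Lemma preimage_shifted_max_lt (Q : Type) (Y : T -> Q -> R) c :
  (fun w => shifted_max (Y^~ w)) @^-1` `]-oo, c[ =
  \bigcap_(s in [set: T]) (Y s @^-1` `]-oo, c - m s[).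
Proof.
apply/seteqP; split => w /=; rewrite in_itv /=.
  by move/shifted_max_ltP => Yc s _ /=; rewrite in_itv /= ltrBrDr.
move=> Yc; apply/shifted_max_ltP => s.
by have := Yc s I; rewrite /= in_itv /= ltrBrDr.
Qed.

End shifted_max.

Lemma measurable_fun_bigmaxr (R : realType) (d : measure_display)
    (Omega : measurableType d) (I : Type) (r : seq I) (p : pred I)
    (f0 : Omega -> R) (f : I -> Omega -> R) :
  measurable_fun setT f0 -> (forall i, measurable_fun setT (f i)) ->
  measurable_fun setT (fun w => \big[Order.max/f0 w]_(i <- r | p i) f i w).
Proof.
move=> mf0 mf; elim: r => [|i r ihr].
  by under eq_fun do rewrite big_nil.
under eq_fun do rewrite big_cons.
by case: (p i) => //; exact: measurable_maxr.
Qed.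

Section shifted_max_process.
Context (R : realType) (d : measure_display) (Omega : measurableType d)
  (P : probability Omega R) (T : finType) (t0 : T) (m : T -> R)
  (X : T -> Omega -> R).

Lemma measurable_shifted_max : is_process X ->
  measurable_fun setT (fun w => shifted_max t0 m (X^~ w)).
Proof.
move=> mX; apply: measurable_fun_bigmaxr => [|t];
  by apply: measurable_funD => //; exact: mX.
Qed.

Lemma integrable_shifted_max :
  (forall t, P.-integrable setT (EFin \o X t)) ->
  P.-integrable setT (fun w => (shifted_max t0 m (X^~ w))%:E).
Proof.
move=> iX; apply: (le_integrable _
  (g := fun w => (\sum_(t in T) (`|X t w| + `|m t|)%:E)%E)) => //.
- apply/measurable_EFinP/measurable_shifted_max => t.
  exact/measurable_EFinP/(measurable_int _ (iX t)).
- move=> w _; rewrite sumEFin /= lee_fin [X in _ <= X]ger0_norm ?norm_shifted_max_le //.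
  by apply: sumr_ge0 => t _; rewrite addr_ge0.
- apply: integrable_sum => // t _; under eq_fun do rewrite EFinD.
  apply: integrableD => //; first exact: (integrable_abse (iX t)).
  exact: finite_measure_integrable_cst.
Qed.

End shifted_max_process.

Section fernique_shifted_max.
Context (R : realType) (d : measure_display) (Omega : measurableType d)
  (P : probability Omega R) (T : finType) (t0 : T) (m : T -> R)
  (X : T -> Omega -> R).
Hypotheses (mX : is_process X) (iX : forall t, P.-integrable setT (EFin \o X t)).

Local Notation M := (fun w => shifted_max t0 m (X^~ w)).

Lemma fernique_shift_le_integral_max mu :
  (fernique P X mu + (\sum_(t in T) m t * mu t)%:E <= \int[P]_w (M w)%:E)%E.
Proof.
rewrite -leeBrDr //.
apply: ge_ereal_sup => _ [d2 [Om2 [P2 [X2 [Z [mX2 XX2 lawZ ->]]]]]].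
rewrite leeBrDr //.
have mZ t := (lawZ t).1.
have iX2 t : P2.-integrable setT (EFin \o X2 t).
  apply: (integrable_of_tails (mX t) (mX2 t) _ (iX t)) => c.
  by apply: same_law_coord => //; exact: measurable_itv.
have -> : (\int[P]_w (M w)%:E = \int[P2]_w (shifted_max t0 m (X2^~ w))%:E)%E.
  apply: integral_eq_of_tails; try exact: measurable_shifted_max.
  by move=> c; rewrite !preimage_shifted_max_lt; apply: XX2 => s; exact: measurable_itv.
rewrite -(integral_comp_law m lawZ) -integralD //;
  [|exact: integrable_eval|exact: integrable_comp_fin].
apply: le_integral => //; last by move=> w _; rewrite -EFinD lee_fin le_shifted_max.
- by apply: integrableD => //; [exact: integrable_eval|exact: integrable_comp_fin].
- exact: integrable_shifted_max.
Qed.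

(* The default [t0] is never used: the maximum is always attained. *)
Definition argmax_index (w : Omega) : T :=
  odflt t0 [pick s | X s w + m s == M w].

Lemma argmax_indexP w : X (argmax_index w) w + m (argmax_index w) = M w.
Proof.
rewrite /argmax_index; case: pickP => [s /eqP //|noattain] /=.
have [t Mt] := shifted_max_attained t0 m (X^~ w).
by have := noattain t; rewrite Mt eqxx.
Qed.

Lemma measurable_argmax_index t : measurable (argmax_index @^-1` [set t]).
Proof.
pose attains w : {ffun T -> bool} := [ffun s => X s w + m s == M w].
have -> : argmax_index = (fun w => odflt t0 [pick s | attains w s]).
  by apply/funext => w; congr odflt; apply: eq_pick => s; rewrite ffunE.
apply: (measurable_fibers_comp (b := attains) (fun v => odflt t0 [pick s | v s])) => s.
have -> : [set w | attains w s] = (fun w => X s w + m s == M w) @^-1` [set true].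
  by apply/seteqP; split => w /=; rewrite ffunE.
rewrite -[X in measurable X]setTI; apply: measurable_fun_eqr => //.
- by apply: measurable_funD => //; exact: mX.
- exact: measurable_shifted_max.
Qed.

Lemma integral_max_le_fernique_shift : exists2 mu, is_pmf mu &
  (\int[P]_w (M w)%:E <= fernique P X mu + (\sum_(t in T) m t * mu t)%:E)%E.
Proof.
have lawZ := has_law_fin_fibers P measurable_argmax_index.
exists (fun t => fine (P (argmax_index @^-1` [set t]))).
  exact: has_law_fin_is_pmf lawZ.
have -> : (\int[P]_w (M w)%:E = \int[P]_w (X (argmax_index w) w)%:E
    + \int[P]_w (m (argmax_index w))%:E)%E.
  have mZ := measurable_argmax_index.
  rewrite -integralD //; [|exact: integrable_eval|exact: integrable_comp_fin].
  by apply: eq_integral => w _; rewrite -EFinD argmax_indexP.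
rewrite (integral_comp_law m lawZ); apply: leeD2r; apply: ereal_sup_ubound.
by exists d, Omega, P, X, argmax_index; split.
Qed.

End fernique_shifted_max.

Lemma bigmaxe_empty (R : realType) (T : finType) (F : T -> \bar R) :
  (T -> False) -> \big[Order.max/-oo%E]_(t in T) F t = -oo%E.
Proof. by move=> noT; rewrite big_pred0 // => t; case: (noT t). Qed.

Lemma no_pmf_of_empty (R : realType) (T : finType) (mu : T -> R) :
  (T -> False) -> ~ is_pmf mu.
Proof.
move=> noT [_]; rewrite big_pred0 => [/esym/eqP|t]; last by case: (noT t).
by rewrite oner_eq0.
Qed.

Theorem mainTheorem4 (R : realType) (d : measure_display) (Omega : measurableType d)
  (P : probability Omega R) (T : finType) (X : T -> Omega -> R) (m : T -> R) :
  is_process X ->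
  (forall t, P.-integrable setT (EFin \o X t)) ->
  (\int[P]_w (\big[Order.max/-oo%E]_(t in T) ((X t w + m t)%:E)))%E
  = ereal_sup [set e | exists mu : T -> R, is_pmf mu /\
                 e = (fernique P X mu + (\sum_(t in T) m t * mu t)%:E)%E].
Proof.
move=> mX iX; have [t0 _|T0] := pickP (fun _ : T => true); last first.
  have noT : T -> False by move=> t; have := T0 t.
  under eq_integral do rewrite bigmaxe_empty //.
  rewrite integral_cst //; transitivity (-oo * 1 : \bar R)%E.
    by congr (_ * _)%E; exact: probability_setT.
  rewrite mule1 (_ : [set e | _] = set0) ?ereal_sup0 //.
  by apply/seteqP; split => // e [mu [/(no_pmf_of_empty noT) [] _]].
under eq_integral do rewrite -(EFin_shifted_max t0).
apply/le_anti/andP; split.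
- have [mu pmf_mu le_mu] := integral_max_le_fernique_shift t0 m mX iX.
  by rewrite (le_trans le_mu) //; apply: ereal_sup_ubound; exists mu.
- apply: ge_ereal_sup => _ [mu [_ ->]].
  exact: fernique_shift_le_integral_max.
Qed.
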